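(* Let $X_1,\dots,X_n$ be features and $Y$ a target that is not a.s. constant. Then for every $i\in\{1,\dots,n\}$, $\mathrm{FI}(i)\in[0,1]$.
   Context: All random variables are discrete with finite support and defined on a common probability space. For discrete random variables (or random vectors) $X$ and $Y$, define $$\mathrm{UD}(X,Y):=\sum_x p_X(x)\sum_y \bigl|p_{Y\mid X=x}(y)-p_Y(y)\bigr|,$$ and, when $Y$ is not almost surely constant, $\mathrm{Dep}(X,Y):=\mathrm{UD}(X,Y)/\mathrm{UD}(Y,Y)$. Given features $X_1,\dots,X_n$ with index set $\mathcal{F}=\{1,\dots,n\}$ and $S\subseteq\mathcal{F}$, write $X_S=(X_i)_{i\in S}$ ($X_\emptyset$ constant) and $\mathrm{Dep}(S,Y):=\mathrm{Dep}(X_S,Y)$. The Berkelmans–Pries feature importance is $$\mathrm{FI}(i):=\sum_{S\subseteq\mathcal{F}\setminus\{i\}}\frac{|S|!\,(n-|S|-1)!}{n!}\bigl(\mathrm{Dep}(S\cup\{i\},Y)-\mathrm{Dep}(S,Y)\bigr).$$ *)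

From mathcomp Require Import all_boot all_order all_algebra.
Set Implicit Arguments. Unset Strict Implicit. Unset Printing Implicit Defensive.
Import Order.TTheory GRing.Theory Num.Theory.
Local Open Scope ring_scope.

Section Defs.
Variables (R : realFieldType) (Omega : finType).

Definition is_pmf (P : Omega -> R) : Prop :=
  (forall w, 0 <= P w) /\ \sum_(w : Omega) P w = 1.

Definition prob (P : Omega -> R) (A : pred Omega) : R := \sum_(w | A w) P w.

(* UD(X,Y) = sum_x p_X(x) sum_y |p_{Y|X=x}(y) - p_Y(y)|,
   with p_{Y|X=x}(y) = P(X=x, Y=y) / P(X=x)  (terms with p_X(x)=0 vanish) *)
Definition UD {V W : finType} (P : Omega -> R) (X : Omega -> V) (Y : Omega -> W) : R :=
  \sum_(x : V) prob P (fun w => X w == x) *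
    \sum_(y : W) `| prob P (fun w => (X w == x) && (Y w == y)) / prob P (fun w => X w == x)
                   - prob P (fun w => Y w == y) |.

Definition Dep {V W : finType} (P : Omega -> R) (X : Omega -> V) (Y : Omega -> W) : R :=
  UD P X Y / UD P Y Y.

Definition as_constant {W : finType} (P : Omega -> R) (Y : Omega -> W) : Prop :=
  exists c : W, prob P (fun w => Y w == c) = 1.

(* the random vector X_S = (X_i)_{i in S}; coordinates outside S are None,
   so X_emptyset is constant *)
Definition XS {n : nat} {T : 'I_n -> finType} (X : forall i : 'I_n, Omega -> T i)
  (S : {set 'I_n}) (w : Omega) : {dffun forall i : 'I_n, option (T i)} :=
  @finfun 'I_n (fun i => option (T i)) (fun i => if i \in S then Some (X i w) else None).

Definition DepS {n : nat} {T : 'I_n -> finType} {W : finType} (P : Omega -> R)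
  (X : forall i : 'I_n, Omega -> T i) (Y : Omega -> W) (S : {set 'I_n}) : R :=
  Dep P (XS X S) Y.

Definition FI {n : nat} {T : 'I_n -> finType} {W : finType} (P : Omega -> R)
  (X : forall i : 'I_n, Omega -> T i) (Y : Omega -> W) (i : 'I_n) : R :=
  \sum_(S : {set 'I_n} | i \notin S)
    ((#|S|`! * (n - #|S| - 1)`!)%:R / (n`!)%:R) *
      (DepS P X Y (S :|: [set i]) - DepS P X Y S).

End Defs.

(* Writing UD(X,Y) = sum_(x,y) |p(x,y) - p(x) p(y)|, the triangle inequality shows
   that UD can only decrease when X is replaced by a function of X, and a termwise
   bound shows UD(X,Y) <= 2 sum_y p(y)(1 - p(y)) = UD(Y,Y), which is positive when Y
   is not a.s. constant.  Hence S |-> Dep(S,Y) is monotone with values in [0,1], so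
   every marginal contribution lies in [0,1].  The Shapley weights form a probability
   distribution on the subsets avoiding i, because there are C(n-1,k) such subsets of
   size k; FI(i) is thus a convex combination of numbers in [0,1]. *)

From mathcomp Require Import all_boot all_order all_algebra.
From mathcomp Require Import ring lra.
From Stdlib Require Import FunctionalExtensionality.
Set Implicit Arguments. Unset Strict Implicit. Unset Printing Implicit Defensive.
Import Order.TTheory GRing.Theory Num.Theory.
Local Open Scope ring_scope.

Definition restrict {n : nat} {T : 'I_n -> finType} (S : {set 'I_n})
  (g : {dffun forall i : 'I_n, option (T i)}) : {dffun forall i : 'I_n, option (T i)} :=
  @finfun 'I_n (fun i => option (T i)) (fun i => if i \in S then g i else None).

Lemma XS_subset {Omega : finType} {n : nat} {T : 'I_n -> finType}
  (X : forall i : 'I_n, Omega -> T i) (S S' : {set 'I_n}) :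
  S \subset S' -> XS X S = restrict S \o XS X S'.
Proof.
move=> /subsetP sub_SS'; apply: functional_extensionality => w; apply/ffunP => i.
by rewrite !ffunE; case: ifP => // /sub_SS' ->.
Qed.

Section FiniteProbability.
Variables (R : realFieldType) (Omega : finType) (P : Omega -> R).
Hypothesis pmfP : is_pmf P.

Lemma prob_ge0 (A : pred Omega) : 0 <= prob P A.
Proof. by apply: sumr_ge0 => w _; case: pmfP. Qed.

Lemma le_prob (A B : pred Omega) : (forall w, A w -> B w) -> prob P A <= prob P B.
Proof.
move=> AB; rewrite /prob [leRHS](bigID A) /= -[leLHS]addr0 lerD //.
  by rewrite le_eqVlt (eq_bigl A) ?eqxx // => w; case Aw: (A w); rewrite ?andbF ?AB.
by apply: sumr_ge0 => w _; case: pmfP.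
Qed.

Lemma prob_le1 (A : pred Omega) : prob P A <= 1.
Proof. by case: pmfP => _ <-; apply: le_prob. Qed.

Lemma sum_prob_partition {V : finType} (A : pred Omega) (X : Omega -> V) :
  \sum_x prob P (fun w => A w && (X w == x)) = prob P A.
Proof. by rewrite /prob (partition_big X predT). Qed.

Lemma prob_comp {V V' : finType} (A : pred Omega) (X : Omega -> V) (f : V -> V') x' :
  prob P (fun w => A w && (f (X w) == x')) =
  \sum_(x | f x == x') prob P (fun w => A w && (X w == x)).
Proof.
rewrite /prob (partition_big X (fun x => f x == x')); last by move=> w /andP[].
apply: eq_bigr => x /eqP fx; apply: eq_bigl => w.
by case: (eqVneq (X w) x) => [->|ne]; rewrite ?fx ?eqxx ?andbT ?(negbTE ne) ?andbF.
Qed.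

Definition marg {V : finType} (X : Omega -> V) x := prob P (fun w => X w == x).

Definition joint {V W : finType} (X : Omega -> V) (Y : Omega -> W) x y :=
  prob P (fun w => (X w == x) && (Y w == y)).

Lemma marg_ge0 {V : finType} (X : Omega -> V) x : 0 <= marg X x.
Proof. exact: prob_ge0. Qed.

Lemma marg_le1 {V : finType} (X : Omega -> V) x : marg X x <= 1.
Proof. exact: prob_le1. Qed.

Lemma sum_marg {V : finType} (X : Omega -> V) : \sum_x marg X x = 1.
Proof. by case: pmfP => _ <-; exact: (sum_prob_partition predT). Qed.

Lemma joint_ge0 {V W : finType} (X : Omega -> V) (Y : Omega -> W) x y :
  0 <= joint X Y x y.
Proof. exact: prob_ge0. Qed.

Lemma joint_le_marg {V W : finType} (X : Omega -> V) (Y : Omega -> W) x y :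
  joint X Y x y <= marg X x.
Proof. by apply: le_prob => w /andP[]. Qed.

Lemma sum_joint {V W : finType} (X : Omega -> V) (Y : Omega -> W) y :
  \sum_x joint X Y x y = marg Y y.
Proof.
rewrite /marg -(sum_prob_partition _ X); apply: eq_bigr => x _.
by apply: eq_bigl => w; rewrite andbC.
Qed.

Lemma marg_comp {V V' : finType} (X : Omega -> V) (f : V -> V') x' :
  marg (f \o X) x' = \sum_(x | f x == x') marg X x.
Proof. by rewrite /marg -(prob_comp predT). Qed.

Lemma joint_comp {V V' W : finType} (X : Omega -> V) (f : V -> V') (Y : Omega -> W) x' y :
  joint (f \o X) Y x' y = \sum_(x | f x == x') joint X Y x y.
Proof.
rewrite /joint; transitivity (prob P (fun w => (Y w == y) && (f (X w) == x'))).
  by apply: eq_bigl => w; rewrite andbC.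
rewrite prob_comp; apply: eq_bigr => x _.
by apply: eq_bigl => w; rewrite andbC.
Qed.

(* The factor [p_X(x)] cancels the conditioning, also when [p_X(x) = 0]. *)
Lemma UD_joint {V W : finType} (X : Omega -> V) (Y : Omega -> W) :
  UD P X Y = \sum_x \sum_y `| joint X Y x y - marg X x * marg Y y |.
Proof.
apply: eq_bigr => x _; rewrite mulr_sumr; apply: eq_bigr => y _.
rewrite -/(marg X x) -/(joint X Y x y) -/(marg Y y).
have [px0|px_neq0] := eqVneq (marg X x) 0.
  have pxy0 : joint X Y x y = 0.
    by apply/eqP; rewrite eq_le joint_ge0 andbT -px0 joint_le_marg.
  by rewrite px0 pxy0 !mul0r subrr normr0.
by rewrite -{1}(ger0_norm (marg_ge0 X x)) -normrM mulrBr mulrCA divff ?mulr1.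
Qed.

Lemma UD_ge0 {V W : finType} (X : Omega -> V) (Y : Omega -> W) : 0 <= UD P X Y.
Proof. by rewrite UD_joint; do 2!apply: sumr_ge0 => ? _. Qed.

Lemma UD_comp_le {V V' W : finType} (X : Omega -> V) (f : V -> V') (Y : Omega -> W) :
  UD P (f \o X) Y <= UD P X Y.
Proof.
rewrite !UD_joint exchange_big [leRHS]exchange_big /=; apply: ler_sum => y _.
rewrite [leRHS](partition_big f predT) //=; apply: ler_sum => x' _.
rewrite joint_comp marg_comp mulr_suml -sumrB; exact: ler_norm_sum.
Qed.

Definition gini {W : finType} (Y : Omega -> W) := \sum_y marg Y y * (1 - marg Y y).

Lemma UD_le_gini {V W : finType} (X : Omega -> V) (Y : Omega -> W) :
  UD P X Y <= 2 * gini Y.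
Proof.
rewrite UD_joint exchange_big /= /gini mulr_sumr; apply: ler_sum => y _.
(* termwise bound whose sum over [x] telescopes to [2 p_Y(y) (1 - p_Y(y))] *)
have bound x : `|joint X Y x y - marg X x * marg Y y| <=
    2 * (joint X Y x y * (1 - marg Y y)) - (joint X Y x y - marg X x * marg Y y).
  have := joint_ge0 X Y x y; have := joint_le_marg X Y x y.
  have := marg_ge0 Y y; have := marg_le1 Y y.
  move=> ? ? ? ?; rewrite ler_norml; apply/andP; split; nra.
apply: le_trans (ler_sum _ (fun x _ => bound x)) _.
rewrite sumrB -mulr_sumr -mulr_suml sum_joint sumrB -mulr_suml sum_joint sum_marg.
by rewrite mul1r subrr subr0.
Qed.

Lemma UD_self {W : finType} (Y : Omega -> W) : UD P Y Y = 2 * gini Y.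
Proof.
rewrite UD_joint /gini mulr_sumr; apply: eq_bigr => y _.
have jointE y' : joint Y Y y y' = if y' == y then marg Y y else 0.
  rewrite /joint /marg; case: eqVneq => [->|ne]; first by apply: eq_bigl => w; rewrite andbb.
  by apply: big_pred0 => w; case: eqVneq => //= ->; rewrite eq_sym (negbTE ne).
rewrite (bigD1 y) //= jointE eqxx.
rewrite (eq_bigr (fun y' => marg Y y * marg Y y')); last first.
  move=> y' ne; rewrite jointE (negbTE ne) sub0r normrN ger0_norm //.
  by rewrite mulr_ge0 ?marg_ge0.
have := sum_marg Y; rewrite (bigD1 y) //= -mulr_sumr => sumE.
have -> : \sum_(y' | y' != y) marg Y y' = 1 - marg Y y by rewrite -sumE; ring.
have -> : marg Y y - marg Y y * marg Y y = marg Y y * (1 - marg Y y) by ring.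
rewrite ger0_norm; first by ring.
by rewrite mulr_ge0 ?marg_ge0 ?subr_ge0 ?marg_le1.
Qed.

Lemma gini_gt0 {W : finType} (Y : Omega -> W) : ~ as_constant P Y -> 0 < gini Y.
Proof.
move=> nonconst.
have [y py_neq0] : exists y, marg Y y != 0.
  apply/existsP; apply: contraT; rewrite negb_exists => /forallP py0.
  have := sum_marg Y; rewrite big1 => [/eqP|y _]; last exact/eqP/negbNE.
  by rewrite eq_sym oner_eq0.
have py_lt1 : marg Y y < 1.
  by rewrite lt_neqAle marg_le1 andbT; apply/eqP => py1; apply: nonconst; exists y.
rewrite /gini (bigD1 y) //= ltr_pwDl //.
  by rewrite mulr_gt0 ?subr_gt0 // lt_neqAle eq_sym py_neq0 marg_ge0.
by apply: sumr_ge0 => z _; rewrite mulr_ge0 ?marg_ge0 ?subr_ge0 ?marg_le1.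
Qed.

Lemma Dep_ge0 {V W : finType} (X : Omega -> V) (Y : Omega -> W) : 0 <= Dep P X Y.
Proof. by rewrite divr_ge0 ?UD_ge0. Qed.

Lemma Dep_le1 {V W : finType} (X : Omega -> V) (Y : Omega -> W) :
  ~ as_constant P Y -> Dep P X Y <= 1.
Proof.
move=> nonconst; have UDYY_gt0 : 0 < UD P Y Y by rewrite UD_self mulr_gt0 ?gini_gt0.
by rewrite ler_pdivrMr // mul1r UD_self UD_le_gini.
Qed.

Lemma Dep_comp_le {V V' W : finType} (X : Omega -> V) (f : V -> V') (Y : Omega -> W) :
  Dep P (f \o X) Y <= Dep P X Y.
Proof. by rewrite ler_wpM2r ?invr_ge0 ?UD_ge0 ?UD_comp_le. Qed.

Lemma DepS_subset {n : nat} {T : 'I_n -> finType} {W : finType}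
  (X : forall i : 'I_n, Omega -> T i) (Y : Omega -> W) (S S' : {set 'I_n}) :
  S \subset S' -> DepS P X Y S <= DepS P X Y S'.
Proof. by move=> sub_SS'; rewrite /DepS (XS_subset X sub_SS') Dep_comp_le. Qed.

End FiniteProbability.

Lemma sum_shapley_fact n (i : 'I_n) :
  (\sum_(S : {set 'I_n} | i \notin S) #|S|`! * (n - #|S| - 1)`! = n`!)%N.
Proof.
case: n i => [[]//|m] i.
have notinE (S : {set 'I_m.+1}) : (i \notin S) = (S \subset [set~ i]).
  by rewrite subsetC sub1set in_setC.
have card_le (S : {set 'I_m.+1}) : i \notin S -> (#|S| <= m)%N.
  by rewrite notinE => /subset_leq_card; rewrite cardsC1 card_ord.
rewrite (partition_big (fun S : {set 'I_m.+1} => (inord #|S| : 'I_m.+1)) predT) //=.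
rewrite (eq_bigr (fun _ => m`!)) => [|k _]; first by rewrite sum_nat_const card_ord factS.
rewrite (eq_bigr (fun _ => k`! * (m - k)`!)%N) => [|S /andP[/card_le le_Sm /eqP <-]]; last first.
  by rewrite inordK ?ltnS // subnAC subn1.
rewrite sum_nat_const.
have -> : #|[pred S : {set 'I_m.+1} | (i \notin S) && (inord #|S| == k)]| =
    #|[set A : {set 'I_m.+1} | A \subset [set~ i] & #|A| == k]|.
  apply: eq_card => S; rewrite !inE -notinE.
  case: (boolP (i \in S)) => //= /card_le le_Sm.
  by rewrite -(inj_eq val_inj) /= inordK.
by rewrite cards_draws cardsC1 card_ord bin_fact // -ltnS.
Qed.

Lemma sum_shapley_weights (R : realFieldType) n (i : 'I_n) :
  \sum_(S : {set 'I_n} | i \notin S) ((#|S|`! * (n - #|S| - 1)`!)%:R / (n`!)%:R) = 1 :> R.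
Proof.
by rewrite -mulr_suml -natr_sum sum_shapley_fact divff // pnatr_eq0 -lt0n fact_gt0.
Qed.

Lemma convex_comb_in01 {R : realFieldType} {I : finType} (p : pred I) (c a : I -> R) :
  (forall j, p j -> 0 <= c j) -> \sum_(j | p j) c j = 1 ->
  (forall j, p j -> 0 <= a j <= 1) -> 0 <= \sum_(j | p j) c j * a j <= 1.
Proof.
move=> c_ge0 sum_c1 a01; apply/andP; split.
  by apply: sumr_ge0 => j pj; have /andP[a_ge0 _] := a01 j pj; rewrite mulr_ge0 ?c_ge0.
rewrite -[leRHS]sum_c1; apply: ler_sum => j pj; have /andP[_ a_le1] := a01 j pj.
by rewrite ler_piMr ?c_ge0.
Qed.

Theorem mainTheorem4 (R : realFieldType) (Omega : finType) (P : Omega -> R)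
  (n : nat) (T : 'I_n -> finType) (W : finType)
  (X : forall i : 'I_n, Omega -> T i) (Y : Omega -> W) :
  is_pmf P -> ~ as_constant P Y ->
  forall i : 'I_n, 0 <= FI P X Y i <= 1.
Proof.
move=> pmfP nonconst i; apply: convex_comb_in01 => [S _||S _].
- by rewrite divr_ge0.
- exact: sum_shapley_weights.
- rewrite subr_ge0 (DepS_subset pmfP) ?subsetUl //= lerBlDr.
  by apply: le_trans (Dep_le1 pmfP _ nonconst) _; rewrite lerDl (Dep_ge0 pmfP).
Qed.
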